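(* Let $u$ be a $C^2$ solution of $$ r\left(1+4u'^2+3u'^4\right) - 2u'\left(1+u'^2\right) + 2r\,u''\left(3u'^2-1\right)=0 \qquad (\ast)$$ with initial conditions $u(0)=0$, $u'(0)=0$, extended to its maximal interval of existence as a solution of $(\ast)$ (equivalently of $u''=-\frac{1+4u'^2+3u'^4}{2(3u'^2-1)}+\frac{u'(1+u'^2)}{r(3u'^2-1)}$ for $r>0$). Then the maximal domain is a bounded interval $[0,r_M)$ with $0<r_M<\infty$, and $\lim_{r\to r_M^-}u'(r)=\frac{1}{\sqrt3}$.
   Context: The solution with $u(0)=u'(0)=0$ exists locally in $C^2$ near $r=0$ and satisfies $u''(0)=1/4$. The coefficient $3u'^2-1$ of $u''$ in $(\ast)$ vanishes exactly when $u'=\pm 1/\sqrt3$. *)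

From Stdlib Require Import Reals.
From Coquelicot Require Import Coquelicot.
Open Scope R_scope.

Definition in_dom (Rm : Rbar) (x : R) : Prop := 0 <= x /\ Rbar_lt x Rm.

Definition is_derive_dom (Rm : Rbar) (f df : R -> R) : Prop :=
  forall r, in_dom Rm r ->
    filterlim (fun h => (f (r + h) - f r) / h)
      (within (fun h => h <> 0 /\ in_dom Rm (r + h)) (locally 0))
      (locally (df r)).

Definition continuous_dom (Rm : Rbar) (f : R -> R) : Prop :=
  forall r, in_dom Rm r ->
    filterlim f (within (in_dom Rm) (locally r)) (locally (f r)).

Definition C2_dom (Rm : Rbar) (u du d2u : R -> R) : Prop :=
  is_derive_dom Rm u du /\ is_derive_dom Rm du d2u /\ continuous_dom Rm d2u.

Definition ode_star (r p q : R) : Prop :=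
  r * (1 + 4 * p ^ 2 + 3 * p ^ 4) - 2 * p * (1 + p ^ 2)
    + 2 * r * q * (3 * p ^ 2 - 1) = 0.

Definition is_solution (Rm : Rbar) (u du d2u : R -> R) : Prop :=
  C2_dom Rm u du d2u /\
  (forall r, in_dom Rm r -> ode_star r (du r) (d2u r)) /\
  u 0 = 0 /\ du 0 = 0.

Definition is_maximal_solution (Rm : Rbar) (u du d2u : R -> R) : Prop :=
  is_solution Rm u du d2u /\
  forall (Rm' : Rbar) (v dv d2v : R -> R),
    Rbar_lt Rm Rm' -> is_solution Rm' v dv d2v ->
    ~ (forall r, in_dom Rm r -> v r = u r).

From Stdlib Require Import Reals Lra Lia Psatz Classical.
From Coquelicot Require Import Coquelicot.
Open Scope R_scope.

(* Dividing the equation by r and letting r -> 0 gives u''(0) = 1/4.  By continuous induction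
   the solution then stays, for as long as it exists, in the region u'' > 0, 0 < u' < 1/sqrt 3
   (with u' < r/2 while r <= 1/sqrt 3): the equation forbids each of these inequalities from
   becoming an equality first.  In that region u'' >= 1/4 as soon as r >= 3, while u' stays
   bounded, so the domain is bounded.  The increasing slope u' has a limit l <= 1/sqrt 3 at the
   right end r_M; if l < 1/sqrt 3, then 3 u'^2 - 1 stays away from 0, the equation is regular
   and Lipschitz near r_M, and Picard iteration continues the solution beyond r_M, contradicting
   maximality. *)

Lemma lipschitz_continuous (f : R -> R) (M : R) : 0 <= M ->
  (forall x y, Rabs (f x - f y) <= M * Rabs (x - y)) -> forall x, continuous f x.
Proof.
  intros HM H x P [eps HP].
  assert (Hd : 0 < eps / (M + 1)) by (apply Rdiv_lt_0_compat; [apply cond_pos | lra]).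
  exists (mkposreal _ Hd); intros y Hy; apply HP.
  change (Rabs (y - x) < eps / (M + 1)) in Hy; change (Rabs (f y - f x) < eps).
  apply Rle_lt_trans with ((M + 1) * Rabs (y - x)).
  - eapply Rle_trans; [apply H|]. apply Rmult_le_compat_r; [apply Rabs_pos | lra].
  - apply Rmult_lt_reg_l with (/ (M + 1)); [apply Rinv_0_lt_compat; lra|].
    field_simplify; [|lra|lra]. unfold Rdiv in Hy. lra.
Qed.

Lemma filterlim_near {T} (F : (T -> Prop) -> Prop) {FF : Filter F} (f : T -> R) l eps :
  filterlim f F (locally l) -> 0 < eps -> F (fun x => l - eps < f x < l + eps).
Proof.
  intros H He. apply (filter_imp (fun x => ball l (mkposreal eps He) (f x))).
  - intros x Hx. change (Rabs (f x - l) < eps) in Hx. apply Rabs_def2 in Hx. lra.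
  - exact (proj1 (filterlim_locally f l) H (mkposreal eps He)).
Qed.

Lemma filterlim_Rplus {T} {F : (T -> Prop) -> Prop} {FF : Filter F} (f g : T -> R) lf lg :
  filterlim f F (locally lf) -> filterlim g F (locally lg) ->
  filterlim (fun x => f x + g x) F (locally (lf + lg)).
Proof. intros Hf Hg. exact (filterlim_comp_2 f g Rplus Hf Hg (filterlim_plus lf lg)). Qed.

Lemma filterlim_Rmult {T} {F : (T -> Prop) -> Prop} {FF : Filter F} (f g : T -> R) lf lg :
  filterlim f F (locally lf) -> filterlim g F (locally lg) ->
  filterlim (fun x => f x * g x) F (locally (lf * lg)).
Proof. intros Hf Hg. exact (filterlim_comp_2 f g Rmult Hf Hg (filterlim_mult lf lg)). Qed.

Lemma filterlim_at_right_id a : filterlim (fun h => h) (at_right a) (locally a).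
Proof. intros P [e He]. exists e. intros h Hh _. apply He, Hh. Qed.

Lemma at_right_interval a b : a < b -> at_right a (fun r => a < r < b).
Proof.
  intros Hab. assert (He : 0 < b - a) by lra. exists (mkposreal _ He).
  intros r Hr Har. change (Rabs (r - a) < b - a) in Hr. apply Rabs_def2 in Hr. lra.
Qed.

Lemma continuous_pos_locally (f : R -> R) z :
  continuous f z -> 0 < f z -> locally z (fun x => 0 < f x).
Proof.
  intros Hc Hz. generalize (filterlim_near _ f (f z) (f z) Hc Hz).
  apply filter_imp; intros; lra.
Qed.

Lemma continuous_ge_of_left (f : R -> R) a z c : a < z -> continuous f z ->
  (forall r, a < r < z -> c <= f r) -> c <= f z.
Proof.
  intros Haz Hc H. apply Rnot_lt_le; intros Hlt.
  assert (Hl : locally z (fun x => f x < c)).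
  { generalize (filterlim_near _ f (f z) (c - f z) Hc ltac:(lra)). apply filter_imp; intros; lra. }
  destruct Hl as [e He].
  set (r := Rmax ((a + z) / 2) (z - e / 2)).
  assert (Hr : a < r < z /\ Rabs (r - z) < e).
  { pose proof (cond_pos e). unfold r, Rmax; destruct Rle_dec;
      (split; [lra | rewrite Rabs_left; lra]). }
  specialize (H r (proj1 Hr)). specialize (He r (proj2 Hr)). lra.
Qed.

Lemma is_derive_affine_minus (f : R -> R) a b z l : is_derive f z l ->
  is_derive (fun x => a * x + b - f x) z (a - l).
Proof.
  intros H. apply (is_derive_minus (K := R_AbsRing) (V := R_NormedModule) (fun x => a * x + b));
    [|exact H].
  auto_derive; [auto | ring].
Qed.

Lemma is_derive_pos_left (h : R -> R) z l a : is_derive h z l -> 0 < l -> a < z ->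
  exists r, a < r < z /\ h r < h z.
Proof.
  intros Hd Hl Haz. apply is_derive_Reals in Hd.
  destruct (Hd (l / 2) ltac:(lra)) as [e He].
  set (k := - Rmin (e / 2) ((z - a) / 2)).
  assert (Hk : - e < k < 0 /\ a < z + k).
  { pose proof (cond_pos e). pose proof (Rmin_l (e / 2) ((z - a) / 2)).
    pose proof (Rmin_r (e / 2) ((z - a) / 2)).
    assert (0 < Rmin (e / 2) ((z - a) / 2)) by (apply Rmin_pos; lra). unfold k; lra. }
  specialize (He k ltac:(lra) ltac:(rewrite Rabs_left; lra)). apply Rabs_def2 in He.
  exists (z + k). split; [lra|].
  assert (Hq : l / 2 < (h (z + k) - h z) / k) by lra.
  apply Rmult_lt_compat_r with (r := - k) in Hq; [|lra].
  replace ((h (z + k) - h z) / k * - k) with (h z - h (z + k)) in Hq by (field; lra). nra.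
Qed.

Lemma continuous_induction a b (P : R -> Prop) : at_right a P ->
  (forall z, a < z < b -> (forall r, a < r < z -> P r) -> locally z P) ->
  forall r, a < r < b -> P r.
Proof.
  intros [e0 Hbase] Hstep r0 Hr0.
  set (S t := a <= t <= b /\ forall r, a < r < t -> P r).
  destruct (completeness S) as [T [HTub HTlub]].
  - exists b. intros t [Ht _]. lra.
  - exists a. split; [lra|]. intros; lra.
  - assert (Hbelow : forall r, a < r < T -> P r).
    { intros r Hr. apply NNPP. intros Hn.
      assert (T <= r); [|lra]. apply HTlub. intros t [Ht HPt].
      apply Rnot_lt_le. intros Hrt. apply Hn, HPt. lra. }
    assert (HTb : T <= b) by (apply HTlub; intros t [Ht _]; lra).
    destruct (Req_dec T b) as [<-|HTne]; [apply Hbelow; lra|].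
    set (t1 := a + Rmin e0 (b - a) / 2).
    assert (Ht1 : a < t1 <= b /\ t1 - a < e0).
    { pose proof (cond_pos e0). pose proof (Rmin_l e0 (b - a)). pose proof (Rmin_r e0 (b - a)).
      assert (0 < Rmin e0 (b - a)) by (apply Rmin_pos; lra). unfold t1; lra. }
    assert (HaT : a < T).
    { enough (t1 <= T) by lra. apply HTub. split; [lra|]. intros r Hr.
      apply Hbase; [change (Rabs (r - a) < e0); rewrite Rabs_right|]; lra. }
    destruct (Hstep T ltac:(lra) Hbelow) as [e He]. exfalso.
    set (t2 := Rmin (T + e / 2) b).
    assert (Ht2 : T < t2 <= b /\ t2 - T < e).
    { pose proof (cond_pos e). unfold t2, Rmin. destruct Rle_dec; lra. }
    enough (t2 <= T) by lra. apply HTub. split; [lra|]. intros r Hr.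
    destruct (Rlt_dec r T); [apply Hbelow; lra|].
    apply He. change (Rabs (r - T) < e). rewrite Rabs_right; lra.
Qed.

Lemma nondecreasing_cvg_at_left (f : R -> R) x0 a B : x0 < a ->
  (forall x y, x0 < x -> x <= y -> y < a -> f x <= f y) ->
  (forall r, x0 < r < a -> f r <= B) ->
  exists L, L <= B /\ (forall r, x0 < r < a -> f r <= L) /\
    filterlim f (at_left a) (locally L).
Proof.
  intros Ha Hmono HB.
  set (E y := exists r, x0 < r < a /\ y = f r).
  destruct (completeness E) as [L [HLub HLlub]].
  - exists B. intros y [r [Hr ->]]. auto.
  - exists (f ((x0 + a) / 2)), ((x0 + a) / 2). split; [lra | auto].
  - assert (Hle : forall r, x0 < r < a -> f r <= L) by (intros r Hr; apply HLub; exists r; auto).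
    exists L. split; [apply HLlub; intros y [r [Hr ->]]; auto|]. split; [exact Hle|].
    apply filterlim_locally. intros eps.
    assert (Hr0 : exists r0, x0 < r0 < a /\ L - eps < f r0).
    { apply NNPP. intros Hn. pose proof (cond_pos eps).
      assert (L <= L - eps); [|lra]. apply HLlub. intros y [r [Hr ->]].
      apply Rnot_lt_le. intros Hlt. apply Hn. exists r. auto. }
    destruct Hr0 as [r0 [Hr0 Hfr0]]. assert (He : 0 < a - r0) by lra.
    exists (mkposreal _ He). intros x Hx Hxa. change (Rabs (x - a) < a - r0) in Hx.
    apply Rabs_def2 in Hx. change (Rabs (f x - L) < eps).
    pose proof (Hmono r0 x ltac:(lra) ltac:(lra) Hxa). pose proof (Hle x ltac:(lra)).
    rewrite Rabs_left1; lra.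
Qed.

Lemma bounded_on_compact (f : R -> R) a b : a <= b ->
  (forall c, a <= c <= b -> continuity_pt f c) ->
  exists B, 0 <= B /\ forall c, a <= c <= b -> Rabs (f c) <= B.
Proof.
  intros Hab Hc.
  destruct (continuity_ab_maj f a b Hab Hc) as [x1 [H1 _]].
  destruct (continuity_ab_min f a b Hab Hc) as [x2 [H2 _]].
  exists (Rabs (f x1) + Rabs (f x2)). split; [pose proof (Rabs_pos (f x1));
    pose proof (Rabs_pos (f x2)); lra|].
  intros c Hc'. specialize (H1 c Hc'). specialize (H2 c Hc').
  revert H1 H2. unfold Rabs; repeat destruct Rcase_abs; lra.
Qed.

Lemma lipschitz_on_compact (f df : R -> R) a b : a <= b ->
  (forall c, a <= c <= b -> is_derive f c (df c)) ->
  (forall c, a <= c <= b -> continuity_pt df c) ->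
  exists K, 0 <= K /\ forall x y, a <= x <= b -> a <= y <= b ->
    Rabs (f x - f y) <= K * Rabs (x - y).
Proof.
  intros Hab Hd Hc. destruct (bounded_on_compact df a b Hab Hc) as [K [HK HB]].
  exists K. split; auto. intros x y Hx Hy.
  assert (Hin : forall c, Rmin y x <= c <= Rmax y x -> a <= c <= b)
    by (intros c; unfold Rmin, Rmax; destruct Rle_dec; lra).
  destruct (MVT_gen f y x df) as [c [Hc2 E]].
  - intros c Hc'. apply Hd, Hin. lra.
  - intros c Hc'. apply continuity_pt_filterlim,
      (ex_derive_continuous (K := R_AbsRing) (V := R_NormedModule)).
    exists (df c). apply Hd, Hin, Hc'.
  - rewrite E, Rabs_mult. apply Rmult_le_compat_r; [apply Rabs_pos | apply HB, Hin, Hc2].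
Qed.

Lemma ex_RInt_continuous_on (f : R -> R) a b : a <= b ->
  (forall s, a <= s <= b -> continuous f s) -> ex_RInt f a b.
Proof.
  intros Hab H. apply (ex_RInt_continuous (V := R_CompleteNormedModule)).
  intros z Hz. rewrite Rmin_left, Rmax_right in Hz by lra. auto.
Qed.

Lemma RInt_lipschitz_upper (f : R -> R) M a t t' :
  (forall s, continuous f s) -> (forall s, Rabs (f s) <= M) ->
  Rabs (RInt f a t - RInt f a t') <= M * Rabs (t - t').
Proof.
  intros Hc Hb.
  assert (Hex : forall x y, ex_RInt f x y)
    by (intros; apply (ex_RInt_continuous (V := R_CompleteNormedModule)); auto).
  replace (RInt f a t - RInt f a t') with (RInt f t' t)
    by (rewrite <- (RInt_Chasles f a t' t) by auto; unfold plus; simpl; lra).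
  destruct (Rle_dec t' t).
  - rewrite (Rabs_right (t - t')), Rmult_comm by lra. apply abs_RInt_le_const; auto.
  - rewrite <- opp_RInt_swap by auto. unfold opp; simpl.
    rewrite Rabs_Ropp, (Rabs_left (t - t')), Rmult_comm by lra.
    replace (- (t - t')) with (t' - t) by ring. apply abs_RInt_le_const; auto; lra.
Qed.

Lemma abs_RInt_minus_le (f g : R -> R) a c B : a <= c -> ex_RInt f a c -> ex_RInt g a c ->
  (forall s, a <= s <= c -> Rabs (f s - g s) <= B) ->
  Rabs (RInt f a c - RInt g a c) <= (c - a) * B.
Proof.
  intros Hac Hf Hg Hb.
  rewrite <- (RInt_minus (V := R_CompleteNormedModule)) by auto.
  apply abs_RInt_le_const; auto. apply (ex_RInt_minus (V := R_NormedModule)); auto.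
Qed.

Lemma is_derive_RInt_upper (f : R -> R) y0 x0 r : (forall s, continuous f s) ->
  is_derive (fun t => y0 + RInt f x0 t) r (f r).
Proof.
  intros Hc. replace (f r) with (plus zero (f r)) by (unfold plus, zero; simpl; ring).
  apply (is_derive_plus (K := R_AbsRing) (V := R_NormedModule) (fun _ => y0));
    [apply (is_derive_const (K := R_AbsRing) (V := R_NormedModule))|].
  apply (is_derive_RInt (V := R_CompleteNormedModule) f _ x0).
  - exists (mkposreal 1 Rlt_0_1). intros b _. apply (RInt_correct (V := R_CompleteNormedModule)).
    apply (ex_RInt_continuous (V := R_CompleteNormedModule)); auto.
  - apply Hc.
Qed.

Lemma RInt_of_derive (f df : R -> R) a b : a <= b ->
  (forall x, a <= x <= b -> is_derive f x (df x)) ->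
  (forall x, a <= x <= b -> continuous df x) -> f b = f a + RInt df a b.
Proof.
  intros Hab Hd Hc.
  assert (H := is_RInt_derive (V := R_CompleteNormedModule) f df a b).
  rewrite Rmin_left, Rmax_right in H by lra.
  rewrite (is_RInt_unique _ _ _ _ (H Hd Hc)). unfold minus, plus, opp; simpl. lra.
Qed.

(** * Picard iteration *)

Lemma eq0_of_le_geometric (E C : R) : (forall n, Rabs E <= C * (1 / 2) ^ n) -> E = 0.
Proof.
  intros H. destruct (Req_dec E 0) as [|HE]; auto. exfalso.
  assert (HC : 0 <= C) by (specialize (H O); simpl in H; pose proof (Rabs_pos E); lra).
  assert (Hp : 0 < Rabs E / (C + 1)) by (apply Rdiv_lt_0_compat; [apply Rabs_pos_lt|]; lra).
  destruct (pow_lt_1_zero (1 / 2) ltac:(rewrite Rabs_right; lra) _ Hp) as [N HN].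
  specialize (HN N (le_n N)). specialize (H N).
  rewrite Rabs_right in HN by (apply Rle_ge, pow_le; lra).
  apply Rmult_lt_compat_l with (r := C + 1) in HN; [|lra].
  replace ((C + 1) * (Rabs E / (C + 1))) with (Rabs E) in HN by (field; lra).
  assert (0 <= (1 / 2) ^ N) by (apply pow_le; lra). nra.
Qed.

Definition clamp (lo hi r : R) := Rmax lo (Rmin hi r).

Lemma clamp_lipschitz lo hi r r' : Rabs (clamp lo hi r - clamp lo hi r') <= Rabs (r - r').
Proof.
  unfold clamp, Rmax, Rmin. repeat destruct Rle_dec; unfold Rabs; repeat destruct Rcase_abs; lra.
Qed.

Lemma clamp_in lo hi r : lo <= hi -> lo <= clamp lo hi r <= hi.
Proof. unfold clamp, Rmax, Rmin; repeat destruct Rle_dec; lra. Qed.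

Lemma clamp_id lo hi r : lo <= r <= hi -> clamp lo hi r = r.
Proof. unfold clamp, Rmax, Rmin; repeat destruct Rle_dec; lra. Qed.

Section Picard.

Variables (G : R -> R -> R) (K M x0 y0 d : R).
Hypotheses (Hd : 0 < d) (HK : 0 <= K) (HKd : K * d <= 1 / 2) (HM : 0 <= M)
  (HGb : forall r y, Rabs (G r y) <= M)
  (HGl : forall r y1 y2, Rabs (G r y1 - G r y2) <= K * Rabs (y1 - y2))
  (HGc : forall y : R -> R, (forall s, continuous y s) ->
     forall s, continuous (fun s => G s (y s)) s).

(* Clamping the upper limit to [x0, x0 + d] keeps every iterate globally M-Lipschitz. *)
Fixpoint picard_iter (n : nat) : R -> R :=
  match n with
  | O => fun _ => y0
  | S m => fun r => y0 + RInt (fun s => G s (picard_iter m s)) x0 (clamp x0 (x0 + d) r)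
  end.

Lemma picard_iter_lipschitz n r r' :
  Rabs (picard_iter n r - picard_iter n r') <= M * Rabs (r - r').
Proof.
  revert r r'; induction n as [|n IH]; intros r r'; simpl.
  - rewrite Rminus_diag, Rabs_R0. pose proof (Rabs_pos (r - r')). nra.
  - replace (y0 + _ - _) with (RInt (fun s => G s (picard_iter n s)) x0 (clamp x0 (x0 + d) r)
      - RInt (fun s => G s (picard_iter n s)) x0 (clamp x0 (x0 + d) r')) by lra.
    eapply Rle_trans; [apply RInt_lipschitz_upper; auto|].
    + apply HGc, (lipschitz_continuous _ M HM), IH.
    + apply Rmult_le_compat_l; auto. apply clamp_lipschitz.
Qed.

Lemma picard_iter_continuous n s : continuous (picard_iter n) s.
Proof. apply (lipschitz_continuous _ M HM), picard_iter_lipschitz. Qed.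

Lemma picard_iter_succ_le n r :
  Rabs (picard_iter (S n) r - picard_iter n r) <= M * d * (1 / 2) ^ n.
Proof.
  revert r; induction n as [|n IH]; intros r;
    pose proof (clamp_in x0 (x0 + d) r ltac:(lra)) as Hc.
  - simpl. replace (y0 + _ - y0) with (RInt (fun s => G s y0) x0 (clamp x0 (x0 + d) r)) by lra.
    eapply Rle_trans; [apply abs_RInt_le_const; [lra| |intros; apply HGb]|nra].
    apply ex_RInt_continuous_on; [lra|]. intros; apply HGc. intros; apply continuous_const.
  - change (Rabs (y0 + RInt (fun s => G s (picard_iter (S n) s)) x0 (clamp x0 (x0 + d) r)
      - (y0 + RInt (fun s => G s (picard_iter n s)) x0 (clamp x0 (x0 + d) r)))
      <= M * d * (1 / 2) ^ S n).
    replace (y0 + _ - (y0 + _)) with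
      (RInt (fun s => G s (picard_iter (S n) s)) x0 (clamp x0 (x0 + d) r)
       - RInt (fun s => G s (picard_iter n s)) x0 (clamp x0 (x0 + d) r)) by lra.
    eapply Rle_trans; [apply abs_RInt_minus_le with (B := K * (M * d * (1 / 2) ^ n)); [lra| | |]|].
    + apply ex_RInt_continuous_on; [lra|]. intros; apply HGc, picard_iter_continuous.
    + apply ex_RInt_continuous_on; [lra|]. intros; apply HGc, picard_iter_continuous.
    + intros s _. eapply Rle_trans; [apply HGl|]. apply Rmult_le_compat_l; auto.
    + set (e := M * d * (1 / 2) ^ n).
      assert (0 <= e) by (apply Rmult_le_pos; [nra | apply pow_le; lra]).
      assert (0 <= K * e) by nra.
      assert ((clamp x0 (x0 + d) r - x0) * (K * e) <= d * (K * e)) by nra.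
      simpl. unfold e in *. nra.
Qed.

Lemma picard_iter_cauchy k n r :
  Rabs (picard_iter (n + k) r - picard_iter n r) <= 2 * M * d * (1 / 2) ^ n.
Proof.
  assert (0 <= 2 * M * d * (1 / 2) ^ n) by (apply Rmult_le_pos; [nra | apply pow_le; lra]).
  enough (Rabs (picard_iter (n + k) r - picard_iter n r)
    <= 2 * M * d * (1 / 2) ^ n * (1 - (1 / 2) ^ k))
    by (assert (0 <= (1 / 2) ^ k) by (apply pow_le; lra); nra).
  induction k as [|k IH].
  - rewrite Nat.add_0_r, Rminus_diag, Rabs_R0. simpl. lra.
  - rewrite Nat.add_succ_r.
    replace (picard_iter (S (n + k)) r - picard_iter n r) with
      ((picard_iter (S (n + k)) r - picard_iter (n + k) r)
       + (picard_iter (n + k) r - picard_iter n r)) by lra.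
    eapply Rle_trans; [apply Rabs_triang|].
    pose proof (picard_iter_succ_le (n + k) r) as Hs. rewrite pow_add in Hs.
    change ((1 / 2) ^ S k) with (1 / 2 * (1 / 2) ^ k). lra.
Qed.

Definition picard_limit r := real (Lim_seq (fun n => picard_iter n r)).

Lemma picard_iter_cvg r : is_lim_seq (fun n => picard_iter n r) (picard_limit r).
Proof.
  apply Lim_seq_correct', ex_lim_seq_cauchy_corr. intros eps.
  assert (Hp : 0 < eps / (2 * M * d + 1)) by (apply Rdiv_lt_0_compat; [apply cond_pos | nra]).
  destruct (pow_lt_1_zero (1 / 2) ltac:(rewrite Rabs_right; lra) _ Hp) as [N HN].
  assert (Hlt : forall n, (N <= n)%nat -> 2 * M * d * (1 / 2) ^ n < eps).
  { intros n Hn. specialize (HN n Hn). rewrite Rabs_right in HN by (apply Rle_ge, pow_le; lra).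
    apply Rmult_lt_compat_l with (r := 2 * M * d + 1) in HN; [|nra].
    replace ((2 * M * d + 1) * (eps / (2 * M * d + 1))) with (pos eps) in HN by (field; nra).
    assert (0 <= (1 / 2) ^ n) by (apply pow_le; lra). nra. }
  exists N. intros n m Hn Hm. destruct (Nat.le_ge_cases n m) as [Hnm|Hmn].
  - replace m with (n + (m - n))%nat by lia. rewrite Rabs_minus_sym.
    eapply Rle_lt_trans; [apply picard_iter_cauchy | apply Hlt; lia].
  - replace n with (m + (n - m))%nat by lia.
    eapply Rle_lt_trans; [apply picard_iter_cauchy | apply Hlt; lia].
Qed.

Lemma picard_limit_near n r :
  Rabs (picard_limit r - picard_iter n r) <= 2 * M * d * (1 / 2) ^ n.
Proof.
  apply (is_lim_seq_le (fun k => Rabs (picard_iter (k + n) r - picard_iter n r))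
    (fun _ => 2 * M * d * (1 / 2) ^ n) (Rabs (picard_limit r - picard_iter n r))
    (2 * M * d * (1 / 2) ^ n)).
  - intros k. rewrite Nat.add_comm. apply picard_iter_cauchy.
  - apply (is_lim_seq_abs _ (picard_limit r - picard_iter n r)), is_lim_seq_minus';
      [apply (is_lim_seq_incr_n (fun k => picard_iter k r)), picard_iter_cvg
      | apply is_lim_seq_const].
  - apply is_lim_seq_const.
Qed.

Lemma picard_limit_lipschitz r r' :
  Rabs (picard_limit r - picard_limit r') <= M * Rabs (r - r').
Proof.
  apply (is_lim_seq_le (fun k => Rabs (picard_iter k r - picard_iter k r'))
    (fun _ => M * Rabs (r - r')) (Rabs (picard_limit r - picard_limit r'))
    (M * Rabs (r - r'))).
  - intros k. apply picard_iter_lipschitz.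
  - apply (is_lim_seq_abs _ (picard_limit r - picard_limit r')), is_lim_seq_minus';
      apply picard_iter_cvg.
  - apply is_lim_seq_const.
Qed.

Lemma picard_limit_fixpoint r : x0 <= r <= x0 + d ->
  picard_limit r = y0 + RInt (fun s => G s (picard_limit s)) x0 r.
Proof.
  intros Hr. apply Rminus_diag_uniq, (eq0_of_le_geometric _ (2 * M * d)). intros n.
  assert (HPc : forall s, continuous picard_limit s)
    by apply (lipschitz_continuous _ M HM), picard_limit_lipschitz.
  assert (Hiter : picard_iter (S n) r = y0 + RInt (fun s => G s (picard_iter n s)) x0 r)
    by (simpl; rewrite clamp_id by lra; reflexivity).
  replace (picard_limit r - _) with ((picard_limit r - picard_iter (S n) r)
    + (RInt (fun s => G s (picard_iter n s)) x0 r - RInt (fun s => G s (picard_limit s)) x0 r))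
    by (rewrite Hiter; lra).
  eapply Rle_trans; [apply Rabs_triang|].
  eapply Rle_trans; [apply Rplus_le_compat;
    [apply picard_limit_near
    | apply abs_RInt_minus_le with (B := K * (2 * M * d * (1 / 2) ^ n)); [lra| | |]]|].
  - apply ex_RInt_continuous_on; [lra|]. intros; apply HGc, picard_iter_continuous.
  - apply ex_RInt_continuous_on; [lra|]. intros; apply HGc, HPc.
  - intros s _. eapply Rle_trans; [apply HGl|].
    apply Rmult_le_compat_l; auto. rewrite Rabs_minus_sym. apply picard_limit_near.
  - set (e := 2 * M * d * (1 / 2) ^ n).
    assert (0 <= e) by (apply Rmult_le_pos; [nra | apply pow_le; lra]).
    assert (0 <= K * e) by nra.
    assert ((r - x0) * (K * e) <= d * (K * e)) by nra.
    change ((1 / 2) ^ S n) with (1 / 2 * (1 / 2) ^ n). unfold e in *. nra.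
Qed.

Lemma integral_equation_unique (x1 : R) (f g : R -> R) : x1 <= x0 + d ->
  (forall r, x0 <= r < x1 -> ex_RInt (fun s => G s (f s)) x0 r /\
     f r = y0 + RInt (fun s => G s (f s)) x0 r) ->
  (forall r, x0 <= r < x1 -> ex_RInt (fun s => G s (g s)) x0 r /\
     g r = y0 + RInt (fun s => G s (g s)) x0 r) ->
  forall r, x0 <= r < x1 -> f r = g r.
Proof.
  intros Hx1 Hf Hg r Hr. apply Rminus_diag_uniq, (eq0_of_le_geometric _ (2 * M * d)).
  intros n. revert r Hr. induction n as [|n IH]; intros r Hr;
    destruct (Hf r Hr) as [Hfi ->]; destruct (Hg r Hr) as [Hgi ->];
    replace (y0 + _ - (y0 + _)) with (RInt (fun s => G s (f s)) x0 r
      - RInt (fun s => G s (g s)) x0 r) by lra.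
  - eapply Rle_trans; [apply abs_RInt_minus_le with (B := 2 * M); auto; try lra|].
    + intros s _. unfold Rminus. eapply Rle_trans; [apply Rabs_triang|].
      rewrite Rabs_Ropp. pose proof (HGb s (f s)). pose proof (HGb s (g s)). lra.
    + simpl. nra.
  - eapply Rle_trans;
      [apply abs_RInt_minus_le with (B := K * (2 * M * d * (1 / 2) ^ n)); auto; try lra|].
    + intros s Hs. eapply Rle_trans; [apply HGl|]. apply Rmult_le_compat_l; auto.
      apply IH. lra.
    + set (e := 2 * M * d * (1 / 2) ^ n).
      assert (0 <= e) by (apply Rmult_le_pos; [nra | apply pow_le; lra]).
      assert (0 <= K * e) by nra.
      assert ((r - x0) * (K * e) <= d * (K * e)) by nra.
      change ((1 / 2) ^ S n) with (1 / 2 * (1 / 2) ^ n). unfold e in *. nra.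
Qed.

End Picard.

Lemma exists_small_step M K c : 0 <= M -> 0 <= K -> 0 < c ->
  exists d, 0 < d /\ d <= c /\ K * d <= 1 / 2 /\ M * d <= c.
Proof.
  intros HM HK Hc. set (d := Rmin c (Rmin (1 / (2 * (K + 1))) (c / (M + 1)))).
  assert (H1 : 0 < 1 / (2 * (K + 1))) by (apply Rdiv_lt_0_compat; lra).
  assert (H2 : 0 < c / (M + 1)) by (apply Rdiv_lt_0_compat; lra).
  pose proof (Rmin_l c (Rmin (1 / (2 * (K + 1))) (c / (M + 1)))) as Hd1.
  pose proof (Rmin_r c (Rmin (1 / (2 * (K + 1))) (c / (M + 1)))) as Hd2.
  pose proof (Rmin_l (1 / (2 * (K + 1))) (c / (M + 1))) as Hd3.
  pose proof (Rmin_r (1 / (2 * (K + 1))) (c / (M + 1))) as Hd4. fold d in Hd1, Hd2.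
  assert (Hd : 0 < d) by (repeat apply Rmin_pos; lra).
  exists d. repeat split; [lra | lra | |].
  - apply Rle_trans with (K * (1 / (2 * (K + 1)))); [apply Rmult_le_compat_l; lra|].
    apply Rmult_le_reg_l with (2 * (K + 1)); [lra|]. field_simplify; lra.
  - apply Rle_trans with (M * (c / (M + 1))); [apply Rmult_le_compat_l; lra|].
    apply Rmult_le_reg_l with (M + 1); [lra|]. field_simplify; nra.
Qed.

Lemma in_dom_le (Rm : Rbar) r z : 0 <= r <= z -> Rbar_lt z Rm -> in_dom Rm r.
Proof. intros Hr Hz. split; [lra|]. destruct Rm; simpl in *; auto; lra. Qed.

Lemma in_dom_locally (Rm : Rbar) r : 0 < r -> Rbar_lt r Rm -> locally r (in_dom Rm).
Proof.
  intros Hr Hm. destruct Rm as [m| |]; simpl in Hm; try contradiction.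
  - assert (He : 0 < Rmin r (m - r)) by (apply Rmin_pos; lra). exists (mkposreal _ He).
    intros x Hx. change (Rabs (x - r) < Rmin r (m - r)) in Hx. apply Rabs_def2 in Hx.
    pose proof (Rmin_l r (m - r)). pose proof (Rmin_r r (m - r)). split; simpl; lra.
  - exists (mkposreal r Hr). intros x Hx. change (Rabs (x - r) < r) in Hx.
    apply Rabs_def2 in Hx. split; simpl; auto; lra.
Qed.

Lemma in_dom_right_0 (Rm : Rbar) : Rbar_lt 0 Rm ->
  locally 0 (fun h => 0 < h -> in_dom Rm h).
Proof.
  intros Hm. destruct Rm as [m| |]; simpl in Hm; try contradiction.
  - exists (mkposreal m Hm). intros h Hh Hh0. change (Rabs (h - 0) < m) in Hh.
    apply Rabs_def2 in Hh. split; simpl; lra.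
  - exists (mkposreal 1 Rlt_0_1). intros h _ Hh0. split; simpl; auto; lra.
Qed.

Lemma is_derive_dom_interior (Rm : Rbar) f df r : is_derive_dom Rm f df ->
  0 < r -> Rbar_lt r Rm -> is_derive f r (df r).
Proof.
  intros H Hr Hm. apply is_derive_Reals. intros eps He.
  destruct (in_dom_locally Rm r Hr Hm) as [e He'].
  assert (Hr' : in_dom Rm r) by (apply He'; apply ball_center).
  destruct (proj1 (filterlim_locally _ _) (H r Hr') (mkposreal eps He)) as [d Hd].
  assert (Hm' : 0 < Rmin d e) by (apply Rmin_pos; apply cond_pos).
  exists (mkposreal _ Hm'). intros h Hh Hlt. simpl in Hlt.
  pose proof (Rmin_l d e). pose proof (Rmin_r d e).
  apply (Hd h); [change (Rabs (h - 0) < d); rewrite Rminus_0_r; lra|].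
  split; auto. apply He'. change (Rabs (r + h - r) < e). rewrite Rplus_minus_l. lra.
Qed.

Lemma continuous_dom_interior (Rm : Rbar) f r : continuous_dom Rm f ->
  0 < r -> Rbar_lt r Rm -> continuous f r.
Proof.
  intros H Hr Hm P HP. pose proof (in_dom_locally Rm r Hr Hm) as Hloc.
  assert (Hr' : in_dom Rm r) by (destruct Hloc as [e He]; apply He, ball_center).
  assert (Hw : locally r (fun x => in_dom Rm x -> P (f x))) by exact (H r Hr' P HP).
  change (locally r (fun x => P (f x))).
  generalize (filter_and _ _ Hloc Hw). apply filter_imp. intros x [Hx HPx]. auto.
Qed.

Lemma is_derive_dom_right_0 (Rm : Rbar) f df : Rbar_lt 0 Rm -> is_derive_dom Rm f df ->
  filterlim (fun h => (f h - f 0) / h) (at_right 0) (locally (df 0)).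
Proof.
  intros Hm H P HP. pose proof (in_dom_right_0 Rm Hm) as Hloc.
  assert (H0 : in_dom Rm 0) by (split; simpl; [lra | exact Hm]).
  assert (Hw : locally 0 (fun h => h <> 0 /\ in_dom Rm (0 + h) ->
    P ((f (0 + h) - f 0) / h))) by exact (H 0 H0 P HP).
  change (locally 0 (fun h => 0 < h -> P ((f h - f 0) / h))).
  generalize (filter_and _ _ Hloc Hw). apply filter_imp. intros h [Hh HPh] Hh0.
  rewrite Rplus_0_l in HPh. apply HPh. split; [lra | auto].
Qed.

Lemma continuous_dom_right_0 (Rm : Rbar) f : Rbar_lt 0 Rm -> continuous_dom Rm f ->
  filterlim f (at_right 0) (locally (f 0)).
Proof.
  intros Hm H P HP. pose proof (in_dom_right_0 Rm Hm) as Hloc.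
  assert (H0 : in_dom Rm 0) by (split; simpl; [lra | exact Hm]).
  assert (Hw : locally 0 (fun h => in_dom Rm h -> P (f h))) by exact (H 0 H0 P HP).
  change (locally 0 (fun h => 0 < h -> P (f h))).
  generalize (filter_and _ _ Hloc Hw). apply filter_imp. intros h [Hh HPh] Hh0. auto.
Qed.

Lemma MVT_dom (Rm : Rbar) f df x y : is_derive_dom Rm f df -> 0 < x -> x < y ->
  Rbar_lt y Rm -> exists c, x <= c <= y /\ f y - f x = df c * (y - x).
Proof.
  intros H Hx Hxy Hy.
  assert (Hin : forall c, x <= c <= y -> is_derive f c (df c)).
  { intros c Hc. apply (is_derive_dom_interior Rm); [exact H | lra |].
    exact (proj2 (in_dom_le Rm c y ltac:(lra) Hy)). }
  destruct (MVT_gen f x y df) as [c [Hc E]]; rewrite ?Rmin_left, ?Rmax_right by lra.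
  - intros c Hc. apply Hin. lra.
  - intros c Hc. apply continuity_pt_filterlim, (ex_derive_continuous (K := R_AbsRing) (V := R_NormedModule)).
    exists (df c). apply Hin. lra.
  - rewrite Rmin_left, Rmax_right in Hc by lra. eauto.
Qed.

Definition is_derive_dom_at (Rm : Rbar) (f df : R -> R) (r : R) : Prop :=
  filterlim (fun h => (f (r + h) - f r) / h)
    (within (fun h => h <> 0 /\ in_dom Rm (r + h)) (locally 0)) (locally (df r)).

Definition continuous_dom_at (Rm : Rbar) (f : R -> R) (r : R) : Prop :=
  filterlim f (within (in_dom Rm) (locally r)) (locally (f r)).

Lemma locally_shift (r : R) (Q : R -> Prop) : locally r Q -> locally 0 (fun h => Q (r + h)).
Proof.
  intros [e He]. exists e. intros h Hh. apply He.
  change (Rabs (h - 0) < e) in Hh. change (Rabs (r + h - r) < e).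
  rewrite Rplus_minus_l. rewrite Rminus_0_r in Hh. exact Hh.
Qed.

Lemma is_derive_dom_at_loc Rm Rm' f df g dg r : in_dom Rm r ->
  locally r (fun x => 0 <= x -> in_dom Rm x /\ g x = f x) -> dg r = df r ->
  is_derive_dom_at Rm f df r -> is_derive_dom_at Rm' g dg r.
Proof.
  intros Hr Hloc Hd H P HP. rewrite Hd in HP.
  assert (Hgr : g r = f r) by (destruct Hloc as [e He]; apply (He r (ball_center r e)), Hr).
  assert (Hf : locally 0 (fun h => h <> 0 /\ in_dom Rm (r + h) -> P ((f (r + h) - f r) / h)))
    by exact (H P HP).
  change (locally 0 (fun h => h <> 0 /\ in_dom Rm' (r + h) -> P ((g (r + h) - g r) / h))).
  generalize (filter_and _ _ (locally_shift r _ Hloc) Hf). apply filter_imp.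
  intros h [Hh HPh] [Hh0 Hdom]. destruct (Hh (proj1 Hdom)) as [Hin Heq].
  rewrite Heq, Hgr. apply HPh. split; auto.
Qed.

Lemma is_derive_dom_at_of_is_derive Rm g dg r : is_derive g r (dg r) -> is_derive_dom_at Rm g dg r.
Proof.
  intros H. apply is_derive_Reals in H. apply filterlim_locally. intros eps.
  destruct (H eps (cond_pos eps)) as [d Hd]. exists d. intros h Hh [Hh0 _].
  change (Rabs (h - 0) < d) in Hh. rewrite Rminus_0_r in Hh. apply (Hd h Hh0 Hh).
Qed.

Lemma continuous_dom_at_loc Rm Rm' f g r : in_dom Rm r ->
  locally r (fun x => 0 <= x -> in_dom Rm x /\ g x = f x) ->
  continuous_dom_at Rm f r -> continuous_dom_at Rm' g r.
Proof.
  intros Hr Hloc H P HP.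
  assert (Hgr : g r = f r) by (destruct Hloc as [e He]; apply (He r (ball_center r e)), Hr).
  rewrite Hgr in HP.
  assert (Hf : locally r (fun x => in_dom Rm x -> P (f x))) by exact (H P HP).
  change (locally r (fun x => in_dom Rm' x -> P (g x))).
  generalize (filter_and _ _ Hloc Hf). apply filter_imp.
  intros x [Hx HPx] Hdom. destruct (Hx (proj1 Hdom)) as [Hin Heq]. rewrite Heq. auto.
Qed.

Lemma continuous_dom_at_of_continuous Rm g r : continuous g r -> continuous_dom_at Rm g r.
Proof.
  intros H P HP. change (locally r (fun x => in_dom Rm x -> P (g x))).
  assert (Hg : locally r (fun x => P (g x))) by exact (H P HP).
  generalize Hg. apply filter_imp. auto.
Qed.

Definition glue (m : R) (f g : R -> R) (r : R) : R := if Rlt_dec r m then f r else g r.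

Lemma glue_lt m f g r : r < m -> glue m f g r = f r.
Proof. intros Hr. unfold glue. destruct Rlt_dec; [auto | lra]. Qed.

Lemma glue_eq_right m x0 a f g r : m <= a -> (forall x, x0 < x < a -> g x = f x) ->
  x0 < r -> glue m f g r = g r.
Proof. intros Hm Hfg Hr. unfold glue. destruct Rlt_dec; [symmetry; apply Hfg; lra | auto]. Qed.

Lemma glue_locally_left a m f g r : m <= a -> 0 <= r < m ->
  locally r (fun x => 0 <= x -> in_dom (Finite a) x /\ glue m f g x = f x).
Proof.
  intros Hm Hr. assert (He : 0 < m - r) by lra. exists (mkposreal _ He).
  intros x Hx Hx0. change (Rabs (x - r) < m - r) in Hx. apply Rabs_def2 in Hx.
  split; [split; simpl; lra | apply glue_lt; lra].
Qed.

Lemma glue_locally_right m x0 a f g r : m <= a -> (forall x, x0 < x < a -> g x = f x) ->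
  x0 < r -> locally r (fun x => g x = glue m f g x).
Proof.
  intros Hm Hfg Hr. generalize (open_gt x0 r Hr). apply filter_imp.
  intros x Hx. symmetry. apply (glue_eq_right m x0 a); auto.
Qed.

Lemma is_solution_glue (a c x0 : R) (u du d2u V P Q : R -> R) :
  0 < x0 < a -> a < c -> is_solution (Finite a) u du d2u ->
  (forall r, x0 < r < c -> is_derive V r (P r) /\ is_derive P r (Q r) /\
     continuous Q r /\ ode_star r (P r) (Q r)) ->
  (forall r, x0 < r < a -> V r = u r /\ P r = du r /\ Q r = d2u r) ->
  exists v dv d2v, is_solution (Finite c) v dv d2v /\
    forall r, in_dom (Finite a) r -> v r = u r.
Proof.
  intros Hx0 Hac [[Hd1 [Hd2 Hc]] [Hode [Hu0 Hp0]]] Hright Hagree.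
  set (m := (x0 + a) / 2). assert (Hm : x0 < m < a) by (unfold m; lra).
  assert (HuV : forall x, x0 < x < a -> V x = u x) by apply Hagree.
  assert (HduP : forall x, x0 < x < a -> P x = du x) by apply Hagree.
  assert (Hd2uQ : forall x, x0 < x < a -> Q x = d2u x) by apply Hagree.
  assert (Hin : forall r, 0 <= r < m -> in_dom (Finite a) r) by (intros r Hr; split; simpl; lra).
  exists (glue m u V), (glue m du P), (glue m d2u Q).
  split; [split; [split; [|split]|split; [|split]]|];
    try (intros r [Hr0 Hr]; simpl in Hr; destruct (Rlt_dec r m)).
  - apply (is_derive_dom_at_loc (Finite a) _ u du);
      [apply Hin | apply glue_locally_left | apply glue_lt | apply Hd1, Hin]; lra.
  - apply is_derive_dom_at_of_is_derive. rewrite (glue_eq_right m x0 a du P) by (auto; lra).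
    apply (is_derive_ext_loc V); [apply (glue_locally_right m x0 a) | apply Hright]; auto; lra.
  - apply (is_derive_dom_at_loc (Finite a) _ du d2u);
      [apply Hin | apply glue_locally_left | apply glue_lt | apply Hd2, Hin]; lra.
  - apply is_derive_dom_at_of_is_derive. rewrite (glue_eq_right m x0 a d2u Q) by (auto; lra).
    apply (is_derive_ext_loc P); [apply (glue_locally_right m x0 a) | apply Hright]; auto; lra.
  - apply (continuous_dom_at_loc (Finite a) _ d2u);
      [apply Hin | apply glue_locally_left | apply Hc, Hin]; lra.
  - apply continuous_dom_at_of_continuous.
    apply (continuous_ext_loc _ Q); [apply (glue_locally_right m x0 a) | apply Hright]; auto; lra.
  - rewrite !glue_lt by lra. apply Hode, Hin. lra.
  - rewrite (glue_eq_right m x0 a du P), (glue_eq_right m x0 a d2u Q) by (auto; lra).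
    apply Hright. lra.
  - rewrite glue_lt by lra. exact Hu0.
  - rewrite glue_lt by lra. exact Hp0.
  - apply glue_lt; lra.
  - rewrite (glue_eq_right m x0 a u V) by (auto; lra). apply HuV. lra.
Qed.

(** * Algebra of the equation *)

Definition inv_sqrt3 := 1 / sqrt 3.

Lemma inv_sqrt3_sqr : inv_sqrt3 ^ 2 = 1 / 3.
Proof.
  unfold inv_sqrt3. pose proof (sqrt_sqrt 3 ltac:(lra)). pose proof (sqrt_lt_R0 3 ltac:(lra)).
  field_simplify; [|lra]. rewrite <- H at 2. field. lra.
Qed.

Lemma inv_sqrt3_bounds : 0.57 < inv_sqrt3 < 0.58.
Proof.
  assert (0 < inv_sqrt3) by (apply Rdiv_lt_0_compat; [lra | apply sqrt_lt_R0; lra]).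
  pose proof inv_sqrt3_sqr. split; nra.
Qed.

Lemma ode_star_factor r p q : ode_star r p q ->
  (1 + p ^ 2) * (r * (1 + 3 * p ^ 2) - 2 * p) = 2 * r * q * (1 - 3 * p ^ 2).
Proof. unfold ode_star. intros H. lra. Qed.

Lemma ode_star_at_inv_sqrt3 r q : ode_star r inv_sqrt3 q -> r = inv_sqrt3.
Proof.
  unfold ode_star. pose proof inv_sqrt3_sqr as S2.
  replace (inv_sqrt3 ^ 4) with ((inv_sqrt3 ^ 2) ^ 2) by ring. rewrite S2. intros H. lra.
Qed.

Lemma ode_star_at_half r q : 0 < r -> r ^ 2 <= 1 / 3 -> ode_star r (r / 2) q -> q < 1 / 2.
Proof.
  unfold ode_star. intros Hr Hr2 H.
  assert (E : r * (3 * r ^ 2 / 4 + 3 * r ^ 4 / 16 - 2 * q * (1 - 3 * r ^ 2 / 4)) = 0)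
    by (rewrite <- H; field).
  apply Rmult_integral in E. destruct E as [E|E]; [lra|].
  replace (r ^ 4) with (r ^ 2 * r ^ 2) in E by ring.
  assert (0 <= r ^ 2) by nra. set (s := r ^ 2) in *.
  assert (s * s <= 1 / 9) by nra.
  apply Rnot_le_lt. intros Hq. assert (1 / 2 * (1 - 3 * s / 4) <= q * (1 - 3 * s / 4)) by nra.
  lra.
Qed.

Lemma ode_star_d2u_ge r p q : 3 <= r -> 0 < p < inv_sqrt3 -> ode_star r p q -> 1 / 4 <= q.
Proof.
  intros Hr Hp H. apply ode_star_factor in H.
  pose proof inv_sqrt3_bounds. pose proof inv_sqrt3_sqr.
  assert (Hp2 : 3 * p ^ 2 < 1) by nra.
  assert (Hb : r / 2 <= r * (1 + 3 * p ^ 2) - 2 * p) by nra.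
  assert (0 <= p ^ 2 * (r * (1 + 3 * p ^ 2) - 2 * p)) by (apply Rmult_le_pos; nra).
  assert (0 <= r * (3 * p ^ 2)) by nra.
  apply Rnot_lt_le. intros Hq. destruct (Rle_dec q 0).
  - assert (0 <= r * (- q) * (1 - 3 * p ^ 2)) by (apply Rmult_le_pos; nra). nra.
  - assert (0 <= r * q * (3 * p ^ 2)) by (apply Rmult_le_pos; nra). nra.
Qed.

Definition coef_r (p : R) := (p + p ^ 3) / (3 * p ^ 2 - 1).
Definition coef_0 (p : R) := (1 + 4 * p ^ 2 + 3 * p ^ 4) / (2 * (3 * p ^ 2 - 1)).
Definition ode_rhs (r p : R) := coef_r p / r - coef_0 p.

Lemma ode_star_rhs r p : r <> 0 -> 3 * p ^ 2 - 1 <> 0 -> ode_star r p (ode_rhs r p).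
Proof.
  intros Hr Hp. unfold ode_star, ode_rhs, coef_r, coef_0.
  field. split; auto.
Qed.

Lemma ode_star_eq_rhs r p q : r <> 0 -> 3 * p ^ 2 - 1 <> 0 -> ode_star r p q ->
  q = ode_rhs r p.
Proof.
  intros Hr Hp H. pose proof (ode_star_rhs r p Hr Hp) as H'. unfold ode_star in H, H'.
  assert (E : 2 * r * (3 * p ^ 2 - 1) * (q - ode_rhs r p) = 0) by lra.
  apply Rmult_integral in E. destruct E as [E|E]; [|lra].
  apply Rmult_integral in E. destruct E; [lra | contradiction].
Qed.

Definition dcoef_r (p : R) :=
  ((1 + 3 * p ^ 2) * (3 * p ^ 2 - 1) - (p + p ^ 3) * (6 * p)) / (3 * p ^ 2 - 1) ^ 2.
Definition dcoef_0 (p : R) :=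
  ((8 * p + 12 * p ^ 3) * (3 * p ^ 2 - 1) - (1 + 4 * p ^ 2 + 3 * p ^ 4) * (6 * p))
    / (2 * (3 * p ^ 2 - 1) ^ 2).

Lemma is_derive_coef_r p : 3 * p ^ 2 - 1 <> 0 -> is_derive coef_r p (dcoef_r p).
Proof. intros H. unfold coef_r, dcoef_r. auto_derive; [exact H | field; exact H]. Qed.

Lemma is_derive_coef_0 p : 3 * p ^ 2 - 1 <> 0 -> is_derive coef_0 p (dcoef_0 p).
Proof.
  intros H. unfold coef_0, dcoef_0. auto_derive; [|field; exact H].
  replace (2 * (3 * (p * (p * 1)) + - (1))) with (2 * (3 * p ^ 2 - 1)) by ring. lra.
Qed.

Lemma continuity_pt_dcoef_r p : 3 * p ^ 2 - 1 <> 0 -> continuity_pt dcoef_r p.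
Proof.
  intros H. apply continuity_pt_filterlim,
    (ex_derive_continuous (K := R_AbsRing) (V := R_NormedModule)).
  unfold dcoef_r. auto_derive. intros E.
  apply Rmult_integral in E. destruct E as [E|E]; apply H; lra.
Qed.

Lemma continuity_pt_dcoef_0 p : 3 * p ^ 2 - 1 <> 0 -> continuity_pt dcoef_0 p.
Proof.
  intros H. apply continuity_pt_filterlim,
    (ex_derive_continuous (K := R_AbsRing) (V := R_NormedModule)).
  unfold dcoef_0. auto_derive. intros E.
  apply Rmult_integral in E. destruct E as [E|E]; [lra|].
  apply Rmult_integral in E. destruct E as [E|E]; apply H; lra.
Qed.

Lemma coef_denominator_neg b p : 0 <= b < inv_sqrt3 -> -1 / 2 <= p <= b -> 3 * p ^ 2 - 1 < 0.
Proof.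
  intros Hb Hp. pose proof inv_sqrt3_sqr. pose proof inv_sqrt3_bounds.
  destruct (Rle_dec 0 p); nra.
Qed.

Lemma coefs_bounded_lipschitz b : 0 <= b < inv_sqrt3 ->
  exists B K, 0 <= B /\ 0 <= K /\
    (forall p, -1 / 2 <= p <= b -> Rabs (coef_r p) <= B /\ Rabs (coef_0 p) <= B) /\
    (forall x y, -1 / 2 <= x <= b -> -1 / 2 <= y <= b ->
       Rabs (coef_r x - coef_r y) <= K * Rabs (x - y) /\
       Rabs (coef_0 x - coef_0 y) <= K * Rabs (x - y)).
Proof.
  intros Hb.
  assert (Hn : forall p, -1 / 2 <= p <= b -> 3 * p ^ 2 - 1 <> 0)
    by (intros p Hp; pose proof (coef_denominator_neg b p Hb Hp); lra).
  assert (Hab : -1 / 2 <= b) by lra.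
  assert (Hc : forall (f df : R -> R) p, is_derive f p (df p) -> continuity_pt f p)
    by (intros f df p H; apply continuity_pt_filterlim,
          (ex_derive_continuous (K := R_AbsRing) (V := R_NormedModule)); exists (df p); exact H).
  destruct (bounded_on_compact coef_r _ _ Hab
    (fun p Hp => Hc _ _ p (is_derive_coef_r p (Hn p Hp)))) as [B1 [HB1 P1]].
  destruct (bounded_on_compact coef_0 _ _ Hab
    (fun p Hp => Hc _ _ p (is_derive_coef_0 p (Hn p Hp)))) as [B2 [HB2 P2]].
  destruct (lipschitz_on_compact coef_r dcoef_r _ _ Hab
    (fun p Hp => is_derive_coef_r p (Hn p Hp))
    (fun p Hp => continuity_pt_dcoef_r p (Hn p Hp))) as [K1 [HK1 Q1]].
  destruct (lipschitz_on_compact coef_0 dcoef_0 _ _ Hab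
    (fun p Hp => is_derive_coef_0 p (Hn p Hp))
    (fun p Hp => continuity_pt_dcoef_0 p (Hn p Hp))) as [K2 [HK2 Q2]].
  exists (B1 + B2), (K1 + K2). split; [lra|]. split; [lra|]. split.
  - intros p Hp. specialize (P1 p Hp). specialize (P2 p Hp). lra.
  - intros x y Hx Hy. specialize (Q1 x y Hx Hy). specialize (Q2 x y Hx Hy).
    pose proof (Rabs_pos (x - y)). split; nra.
Qed.

(* ode_rhs on the box [a/2, 2a] x [-1/2, b], extended to the plane by clamping; there it is
   bounded and Lipschitz in p, as Picard iteration requires. *)
Definition clamped_rhs (a b r p : R) := ode_rhs (clamp (a / 2) (2 * a) r) (clamp (-1 / 2) b p).

Lemma clamped_rhs_bounded_lipschitz a b : 0 < a -> 0 <= b < inv_sqrt3 ->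
  exists M K, 0 <= M /\ 0 <= K /\
    (forall r p, Rabs (clamped_rhs a b r p) <= M) /\
    (forall r p1 p2, Rabs (clamped_rhs a b r p1 - clamped_rhs a b r p2) <= K * Rabs (p1 - p2)) /\
    (forall y : R -> R, (forall s, continuous y s) ->
       forall s, continuous (fun s => clamped_rhs a b s (y s)) s).
Proof.
  intros Ha Hb. destruct (coefs_bounded_lipschitz b Hb) as [B [K [HB [HK [Hbd Hlip]]]]].
  set (cr := clamp (a / 2) (2 * a)). set (cy := clamp (-1 / 2) b).
  assert (Hcy : forall p, -1 / 2 <= cy p <= b) by (intros; apply clamp_in; lra).
  assert (Hcr : forall r, a / 2 <= cr r <= 2 * a) by (intros; apply clamp_in; lra).
  assert (Hinv : forall r, 0 < / cr r <= 2 / a).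
  { intros r. specialize (Hcr r). split; [apply Rinv_0_lt_compat; lra|].
    replace (2 / a) with (/ (a / 2)) by (field; lra). apply Rinv_le_contravar; lra. }
  assert (H2a : 0 < 2 / a) by (apply Rdiv_lt_0_compat; lra).
  exists (B * (2 / a) + B), (K * (2 / a) + K). split; [nra|]. split; [nra|]. split; [|split].
  - intros r p. unfold clamped_rhs, ode_rhs. fold cr cy. unfold Rdiv.
    destruct (Hbd (cy p) (Hcy p)) as [P1 P2]. specialize (Hinv r).
    eapply Rle_trans; [apply Rabs_triang|]. rewrite Rabs_Ropp, Rabs_mult, (Rabs_right (/ cr r)) by lra.
    assert (Rabs (coef_r (cy p)) * / cr r <= B * (2 / a))
      by (apply Rmult_le_compat; auto; [apply Rabs_pos | lra | lra]).
    lra.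
  - intros r p1 p2. unfold clamped_rhs, ode_rhs. fold cr cy. unfold Rdiv.
    destruct (Hlip (cy p1) (cy p2) (Hcy p1) (Hcy p2)) as [L1 L2].
    pose proof (clamp_lipschitz (-1 / 2) b p1 p2) as Lc. fold cy in Lc. specialize (Hinv r).
    replace (_ - _) with ((coef_r (cy p1) - coef_r (cy p2)) * / cr r
      + - (coef_0 (cy p1) - coef_0 (cy p2))) by ring.
    eapply Rle_trans; [apply Rabs_triang|].
    rewrite Rabs_Ropp, Rabs_mult, (Rabs_right (/ cr r)) by lra.
    pose proof (Rabs_pos (cy p1 - cy p2)). pose proof (Rabs_pos (p1 - p2)).
    pose proof (Rabs_pos (coef_r (cy p1) - coef_r (cy p2))).
    assert (Rabs (coef_r (cy p1) - coef_r (cy p2)) * / cr r <= K * Rabs (p1 - p2) * (2 / a))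
      by (apply Rmult_le_compat; nra).
    nra.
  - intros y Hy s.
    assert (Ccoef : forall f : R -> R, (forall x z, -1 / 2 <= x <= b -> -1 / 2 <= z <= b ->
        Rabs (f x - f z) <= K * Rabs (x - z)) -> forall t, continuous (fun z => f (cy z)) t).
    { intros f Hf. apply (lipschitz_continuous _ K HK). intros x z.
      eapply Rle_trans; [apply Hf; apply Hcy|]. apply Rmult_le_compat_l; auto. apply clamp_lipschitz. }
    assert (Cinv : continuous (fun z => / cr z) s).
    { apply continuity_pt_filterlim, continuity_pt_inv; [|specialize (Hcr s); lra].
      apply continuity_pt_filterlim, (lipschitz_continuous _ 1); [lra|].
      intros; rewrite Rmult_1_l; apply clamp_lipschitz. }
    apply (continuous_minus (fun s => coef_r (cy (y s)) * / cr s) (fun s => coef_0 (cy (y s))));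
      [apply (continuous_mult (K := R_AbsRing) (fun s => coef_r (cy (y s))) (fun s => / cr s));
        [|exact Cinv] |];
      apply (continuous_comp y (fun z => _ (cy z))); [apply Hy | | apply Hy |];
      apply Ccoef; intros; [apply Hlip | apply Hlip]; auto.
Qed.

(** * The slope invariant *)

(* The clause du r < r/2 excludes du = 1/sqrt 3, which the equation allows only at
   r = 1/sqrt 3. *)
Definition slope_invariant (du d2u : R -> R) (r : R) :=
  0 < d2u r /\ 0 < du r /\ du r < inv_sqrt3 /\ (r <= inv_sqrt3 -> du r < r / 2).

Section Solution.

Variables (Rm : Rbar) (u du d2u : R -> R).
Hypotheses (Hm : Rbar_lt 0 Rm) (Hsol : is_solution Rm u du d2u).

Let Hdu : is_derive_dom Rm du d2u := proj1 (proj2 (proj1 Hsol)).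
Let Hd2u : continuous_dom Rm d2u := proj2 (proj2 (proj1 Hsol)).
Let Hode : forall r, in_dom Rm r -> ode_star r (du r) (d2u r) := proj1 (proj2 Hsol).
Let Hdu0 : du 0 = 0 := proj2 (proj2 (proj2 Hsol)).

Lemma solution_slope_right_0 :
  filterlim (fun h => du h / h) (at_right 0) (locally (d2u 0)).
Proof.
  generalize (is_derive_dom_right_0 Rm du d2u Hm Hdu). rewrite Hdu0.
  apply filterlim_ext. intros h. now rewrite Rminus_0_r.
Qed.

Lemma solution_d2u_0 : d2u 0 = 1 / 4.
Proof.
  set (q0 := d2u 0).
  pose proof solution_slope_right_0 as Hb.
  pose proof (continuous_dom_right_0 Rm d2u Hm Hd2u) as Hq.
  assert (Hp : filterlim du (at_right 0) (locally (q0 * 0))).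
  { apply (filterlim_ext_loc (fun h => du h / h * h)).
    - exists (mkposreal 1 Rlt_0_1). intros h _ Hh. field. lra.
    - apply filterlim_Rmult; [exact Hb | apply filterlim_at_right_id]. }
  (* the ODE divided by r, rearranged so that every term has a limit at 0+ *)
  set (E h := 1 + (-2) * (du h / h) + (-2) * d2u h
    + du h * du h * (4 + 3 * (du h * du h) + (-2) * (du h / h) + 6 * d2u h)).
  assert (HE : filterlim E (at_right 0) (locally (1 + (-2) * q0 + (-2) * q0
    + q0 * 0 * (q0 * 0) * (4 + 3 * (q0 * 0 * (q0 * 0)) + (-2) * q0 + 6 * q0)))).
  { repeat first [ apply filterlim_Rplus | apply filterlim_Rmult | apply filterlim_const
                 | eassumption ]. }
  assert (HE0 : filterlim E (at_right 0) (locally 0)).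
  { apply (filterlim_ext_loc (fun _ => 0)); [|apply filterlim_const].
    change (locally 0 (fun h => 0 < h -> 0 = E h)).
    generalize (in_dom_right_0 Rm Hm). apply filter_imp. intros h Hh Hh0.
    specialize (Hode h (Hh Hh0)). unfold ode_star in Hode. unfold E.
    apply Rmult_eq_reg_l with h; [|lra]. rewrite Rmult_0_r, <- Hode. field. lra. }
  pose proof (filterlim_locally_unique (F := at_right 0) E _ _ HE HE0). lra.
Qed.

Lemma solution_invariant_near_0 : at_right 0 (slope_invariant du d2u).
Proof.
  pose proof solution_d2u_0 as Hq0. pose proof inv_sqrt3_bounds.
  assert (H8 : 0 < 1 / 8) by lra.
  generalize (filter_and _ _
    (filter_and _ _ (filterlim_near _ _ _ _ solution_slope_right_0 H8)
       (filterlim_near _ _ _ _ (continuous_dom_right_0 Rm d2u Hm Hd2u) H8))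
    (at_right_interval 0 1 Rlt_0_1)).
  apply filter_imp. intros h [[Hb Hq] Hh]. rewrite Hq0 in Hb, Hq.
  assert (E : du h = du h / h * h) by (field; lra).
  set (b := du h / h) in *.
  assert (b * h < 3 / 8 * h) by nra. assert (0 < b * h) by nra.
  unfold slope_invariant. repeat split; try intros; lra.
Qed.

Section Step.

Variable z : R.
Hypotheses (Hz : 0 < z) (HzR : Rbar_lt z Rm)
  (IH : forall r, 0 < r < z -> slope_invariant du d2u r).

Let Hderz : is_derive du z (d2u z) := is_derive_dom_interior Rm du d2u z Hdu Hz HzR.
Let Hodez : ode_star z (du z) (d2u z) := Hode z (conj (Rlt_le _ _ Hz) HzR).

Lemma invariant_step_affine_minus_du_ge a b :
  (forall r, 0 < r < z -> 0 <= a * r + b - du r) -> 0 <= a * z + b - du z.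
Proof.
  apply (continuous_ge_of_left (fun x => a * x + b - du x) 0 z 0 Hz).
  apply (ex_derive_continuous (K := R_AbsRing) (V := R_NormedModule)).
  eexists. apply is_derive_affine_minus, Hderz.
Qed.

Lemma invariant_step_d2u_nonneg : 0 <= d2u z.
Proof.
  apply (continuous_ge_of_left d2u 0 z 0 Hz); [apply (continuous_dom_interior Rm); auto|].
  intros r Hr. apply Rlt_le, IH, Hr.
Qed.

Lemma invariant_step_du_pos : 0 < du z.
Proof.
  destruct (MVT_dom Rm du d2u (z / 2) z Hdu ltac:(lra) ltac:(lra) HzR) as [c [Hc E]].
  assert (Hc0 : 0 <= d2u c).
  { destruct (Req_dec c z) as [->|]; [apply invariant_step_d2u_nonneg | apply Rlt_le, IH; lra]. }
  destruct (IH (z / 2) ltac:(lra)) as [_ [Hp _]]. nra.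
Qed.

(* At a first contact du z = z/2 the ODE forces d2u z < 1/2, so z/2 - du would have been
   negative just before z. *)
Lemma invariant_step_du_lt_half : z <= inv_sqrt3 -> du z < z / 2.
Proof.
  intros Hzs. pose proof inv_sqrt3_sqr. pose proof inv_sqrt3_bounds.
  assert (Hle : 0 <= 1 / 2 * z + 0 - du z).
  { apply invariant_step_affine_minus_du_ge. intros r Hr.
    destruct (IH r Hr) as [_ [_ [_ H']]]. specialize (H' ltac:(lra)). lra. }
  destruct (Req_dec (du z) (z / 2)) as [Heq|]; [exfalso|lra].
  pose proof Hodez as Ho. rewrite Heq in Ho. apply ode_star_at_half in Ho; [|lra|nra].
  destruct (is_derive_pos_left (fun x => 1 / 2 * x + 0 - du x) z (1 / 2 - d2u z) 0
    (is_derive_affine_minus du _ _ _ _ Hderz) ltac:(lra) Hz) as [r [Hr Hlt]].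
  destruct (IH r Hr) as [_ [_ [_ H']]]. specialize (H' ltac:(lra)). lra.
Qed.

Lemma invariant_step_du_lt_inv_sqrt3 : du z < inv_sqrt3.
Proof.
  assert (Hle : 0 <= 0 * z + inv_sqrt3 - du z).
  { apply invariant_step_affine_minus_du_ge. intros r Hr. destruct (IH r Hr) as [_ [_ [H _]]]. lra. }
  destruct (Req_dec (du z) inv_sqrt3) as [Heq|]; [exfalso|lra].
  pose proof Hodez as Ho. rewrite Heq in Ho. apply ode_star_at_inv_sqrt3 in Ho.
  pose proof (invariant_step_du_lt_half ltac:(lra)). pose proof inv_sqrt3_bounds. lra.
Qed.

(* If d2u z = 0, then g(x) = x (1 + 3 du x^2) - 2 du x vanishes at z with g'(z) > 0,
   while the ODE makes g positive wherever d2u > 0 and du < 1/sqrt 3. *)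
Lemma invariant_step_d2u_pos : 0 < d2u z.
Proof.
  pose proof invariant_step_d2u_nonneg. destruct (Req_dec (d2u z) 0) as [Hq0|]; [exfalso|lra].
  set (g x := x * (1 + 3 * du x ^ 2) - 2 * du x).
  assert (Hg : is_derive g z (1 + 3 * du z ^ 2 + z * (6 * du z * d2u z) - 2 * d2u z)).
  { unfold g. auto_derive; [repeat split; exists (d2u z); exact Hderz|].
    replace (Derive (fun x => du x) z) with (d2u z)
      by (symmetry; apply is_derive_unique, Hderz). ring. }
  pose proof (ode_star_factor _ _ _ Hodez) as Ho. rewrite Hq0 in Hg, Ho.
  assert (Hgz : g z = 0) by (unfold g; nra).
  destruct (is_derive_pos_left g z _ 0 Hg ltac:(nra) Hz) as [r [Hr Hlt]].
  destruct (IH r Hr) as [Hq [_ [Hp _]]]. pose proof inv_sqrt3_sqr. pose proof inv_sqrt3_bounds.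
  pose proof (ode_star_factor _ _ _ (Hode r (in_dom_le Rm r z ltac:(lra) HzR))) as Hf.
  assert (0 < 2 * r * d2u r * (1 - 3 * du r ^ 2)).
  { apply Rmult_lt_0_compat; [nra|]. destruct (IH r Hr) as [_ [Hp0 _]]. nra. }
  unfold g in Hlt, Hgz. rewrite Hgz in Hlt.
  assert (0 < 1 + du r ^ 2) by nra. nra.
Qed.

Lemma invariant_step_invariant_locally : locally z (slope_invariant du d2u).
Proof.
  pose proof inv_sqrt3_bounds.
  assert (Hcont : forall a b, continuous (fun x => a * x + b - du x) z).
  { intros a b. apply (ex_derive_continuous (K := R_AbsRing) (V := R_NormedModule)).
    eexists. apply is_derive_affine_minus, Hderz. }
  assert (Hhalf : locally z (fun x => x <= inv_sqrt3 -> du x < x / 2)).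
  { destruct (Rle_dec z inv_sqrt3) as [Hzs|Hzs].
    - generalize (continuous_pos_locally _ z (Hcont (1 / 2) 0)
        ltac:(pose proof (invariant_step_du_lt_half Hzs); lra)).
      apply filter_imp. intros x Hx _. lra.
    - generalize (open_gt inv_sqrt3 z ltac:(lra)). apply filter_imp. intros x Hx Hxs. lra. }
  repeat apply filter_and; [| | |exact Hhalf].
  - apply continuous_pos_locally; [apply (continuous_dom_interior Rm); auto | apply invariant_step_d2u_pos].
  - apply continuous_pos_locally; [apply (ex_derive_continuous (K := R_AbsRing)
      (V := R_NormedModule)); eexists; exact Hderz | apply invariant_step_du_pos].
  - generalize (continuous_pos_locally _ z (Hcont 0 inv_sqrt3)
      ltac:(pose proof invariant_step_du_lt_inv_sqrt3; lra)). apply filter_imp. intros; lra.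
Qed.

End Step.

Lemma solution_invariant r : 0 < r -> Rbar_lt r Rm -> slope_invariant du d2u r.
Proof.
  intros Hr HrR.
  assert (Hb : exists b, r < b /\ forall z, z < b -> Rbar_lt z Rm).
  { destruct Rm as [m| |]; simpl in HrR; try contradiction.
    - exists m. split; [auto | intros; exact H].
    - exists (r + 1). split; [lra | intros; exact I]. }
  destruct Hb as [b [Hrb Hb]].
  apply (continuous_induction 0 b); [apply solution_invariant_near_0 | | lra].
  intros z Hz IHz. apply (invariant_step_invariant_locally z); [lra | apply Hb; lra | exact IHz].
Qed.

Lemma solution_du_nondecreasing x y : 0 < x -> x <= y -> Rbar_lt y Rm -> du x <= du y.
Proof.
  intros Hx Hxy Hy. destruct (Req_dec x y) as [<-|]; [lra|].
  destruct (MVT_dom Rm du d2u x y Hdu Hx ltac:(lra) Hy) as [c [Hc E]].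
  destruct (solution_invariant c ltac:(lra) (proj2 (in_dom_le Rm c y ltac:(lra) Hy))) as [Hq _].
  nra.
Qed.

End Solution.

Lemma solution_domain_bounded (u du d2u : R -> R) : ~ is_solution p_infty u du d2u.
Proof.
  intros Hsol. pose proof inv_sqrt3_bounds.
  pose proof Hsol as [[_ [Hdu _]] [Hode _]].
  destruct (MVT_dom p_infty du d2u 3 9 Hdu ltac:(lra) ltac:(lra) I) as [c [Hc Hmvt]].
  destruct (solution_invariant p_infty u du d2u I Hsol c ltac:(lra) I) as [_ [Hp [Hps _]]].
  pose proof (ode_star_d2u_ge c (du c) (d2u c) ltac:(lra) (conj Hp Hps)
    (Hode c (in_dom_le p_infty c 9 ltac:(lra) I))) as Hq.
  destruct (solution_invariant p_infty u du d2u I Hsol 9 ltac:(lra) I) as [_ [_ [H9 _]]].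
  destruct (solution_invariant p_infty u du d2u I Hsol 3 ltac:(lra) I) as [_ [H3 _]].
  nra.
Qed.

(** * Continuing a solution whose slope stays below 1/sqrt 3 *)

Section Extension.

Variables (a L : R) (u du d2u : R -> R).
Hypotheses (Ha : 0 < a) (Hsol : is_solution (Finite a) u du d2u)
  (HInv : forall r, 0 < r < a -> slope_invariant du d2u r)
  (HL : forall r, 0 < r < a -> du r <= L) (HLs : L < inv_sqrt3).

Section Picard_step.

Variables (b M K d : R).
Hypotheses (Hb : 0 <= b < inv_sqrt3) (HM : 0 <= M) (HK : 0 <= K)
  (HGb : forall r p, Rabs (clamped_rhs a b r p) <= M)
  (HGl : forall r p1 p2,
     Rabs (clamped_rhs a b r p1 - clamped_rhs a b r p2) <= K * Rabs (p1 - p2))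
  (HGc : forall y : R -> R, (forall s, continuous y s) ->
     forall s, continuous (fun s => clamped_rhs a b s (y s)) s)
  (Hd : 0 < d) (Hda : d <= a / 2) (HKd : K * d <= 1 / 2) (HMd : M * d <= 1 / 2)
  (HMdL : M * d <= b - L).

Let G := clamped_rhs a b.
(* Start slightly before a, so that the Picard interval [x0, x0 + d] reaches beyond a. *)
Let x0 := a - d / 4.
Let P := picard_limit G x0 (du x0) d.

Lemma extension_picard_continuous s : continuous P s.
Proof. apply (lipschitz_continuous _ M HM), (picard_limit_lipschitz G K M); auto. Qed.

Lemma extension_picard_fixpoint r : x0 <= r <= x0 + d ->
  P r = du x0 + RInt (fun s => G s (P s)) x0 r.
Proof. apply (picard_limit_fixpoint G K M); auto. Qed.

Lemma extension_picard_box r : x0 <= r <= x0 + d -> -1 / 2 <= P r <= b.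
Proof.
  intros Hr. rewrite extension_picard_fixpoint by exact Hr.
  assert (HA : Rabs (RInt (fun s => G s (P s)) x0 r) <= (r - x0) * M).
  { apply abs_RInt_le_const; [lra| |intros; apply HGb].
    apply ex_RInt_continuous_on; [lra|]. intros; apply HGc, extension_picard_continuous. }
  destruct (HInv x0 ltac:(unfold x0; lra)) as [_ [Hp0 _]]. pose proof (HL x0 ltac:(unfold x0; lra)).
  assert ((r - x0) * M <= M * d) by nra.
  revert HA. unfold Rabs. destruct Rcase_abs; intros; lra.
Qed.

Lemma extension_rhs_eq r p : a / 2 <= r <= 2 * a -> -1 / 2 <= p <= b -> G r p = ode_rhs r p.
Proof. intros Hr Hp. unfold G, clamped_rhs. rewrite !clamp_id; auto. Qed.

Lemma extension_picard_solves r : x0 < r < x0 + d ->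
  is_derive P r (G r (P r)) /\ ode_star r (P r) (G r (P r)).
Proof.
  intros Hr. pose proof (extension_picard_box r ltac:(lra)) as Hbox. split.
  - apply (is_derive_ext_loc (fun t => du x0 + RInt (fun s => G s (P s)) x0 t)).
    + generalize (filter_and _ _ (open_gt x0 r (proj1 Hr)) (open_lt (x0 + d) r (proj2 Hr))).
      apply filter_imp. intros t Ht. symmetry. apply extension_picard_fixpoint. lra.
    + apply (is_derive_RInt_upper (fun s => G s (P s))), HGc, extension_picard_continuous.
  - rewrite extension_rhs_eq by (unfold x0 in *; lra). apply ode_star_rhs; [unfold x0 in *; lra|].
    pose proof (coef_denominator_neg b (P r) ltac:(lra) Hbox). lra.
Qed.

Lemma extension_d2u_eq s : x0 <= s < a -> d2u s = G s (du s).
Proof.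
  intros Hs. assert (HLb : L <= b) by nra.
  destruct (HInv s ltac:(unfold x0 in *; lra)) as [_ [Hp _]].
  pose proof (HL s ltac:(unfold x0 in *; lra)).
  rewrite extension_rhs_eq by (unfold x0 in *; lra).
  apply ode_star_eq_rhs; [unfold x0 in *; lra | |].
  - pose proof (coef_denominator_neg b (du s) ltac:(lra) ltac:(lra)). lra.
  - apply (proj1 (proj2 Hsol)). split; simpl; unfold x0 in *; lra.
Qed.

Lemma extension_du_eq_picard r : x0 <= r < a -> du r = P r.
Proof.
  destruct Hsol as [[Hd1 [Hd2 Hc]] _].
  apply (integral_equation_unique G K M x0 (du x0) d); auto; [unfold x0; lra | |].
  - intros t Ht.
    assert (Hex : ex_RInt d2u x0 t).
    { apply ex_RInt_continuous_on; [lra|]. intros s Hs.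
      apply (continuous_dom_interior (Finite a)); auto; simpl; unfold x0 in *; lra. }
    assert (Heq : forall s, Rmin x0 t < s < Rmax x0 t -> d2u s = G s (du s)).
    { intros s Hs. rewrite Rmin_left, Rmax_right in Hs by lra. apply extension_d2u_eq. lra. }
    split; [apply (ex_RInt_ext _ _ _ _ Heq Hex)|]. rewrite <- (RInt_ext _ _ _ _ Heq).
    apply RInt_of_derive; [lra | |].
    + intros s Hs. apply (is_derive_dom_interior (Finite a)); auto; simpl; unfold x0 in *; lra.
    + intros s Hs. apply (continuous_dom_interior (Finite a)); auto; simpl; unfold x0 in *; lra.
  - intros t Ht. split; [|apply extension_picard_fixpoint; unfold x0 in *; lra].
    apply ex_RInt_continuous_on; [lra|]. intros; apply HGc, extension_picard_continuous.
Qed.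

End Picard_step.

Lemma solution_extension : exists Rm' v dv d2v, Rbar_lt (Finite a) Rm' /\
  is_solution Rm' v dv d2v /\ forall r, in_dom (Finite a) r -> v r = u r.
Proof.
  pose proof inv_sqrt3_bounds.
  assert (HL0 : 0 <= L)
    by (destruct (HInv (a / 2) ltac:(lra)) as [_ [Hp _]]; pose proof (HL (a / 2) ltac:(lra)); lra).
  set (b := (L + inv_sqrt3) / 2).
  destruct (clamped_rhs_bounded_lipschitz a b Ha ltac:(unfold b; lra))
    as [M [K [HM [HK [HGb [HGl HGc]]]]]].
  destruct (exists_small_step M K (Rmin (a / 2) (Rmin (1 / 2) (b - L))) HM HK
    ltac:(repeat apply Rmin_pos; unfold b; lra)) as [d [Hd [Hdc [HKd HMd]]]].
  pose proof (Rmin_l (a / 2) (Rmin (1 / 2) (b - L))). pose proof (Rmin_r (a / 2) (Rmin (1 / 2) (b - L))).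
  pose proof (Rmin_l (1 / 2) (b - L)). pose proof (Rmin_r (1 / 2) (b - L)).
  assert (Hb : 0 <= b < inv_sqrt3) by (unfold b; lra).
  assert (Hda : d <= a / 2) by lra. assert (HMd' : M * d <= 1 / 2) by lra.
  assert (HMdL : M * d <= b - L) by lra.
  pose proof (extension_picard_continuous b M K d HM HK HGb HGl HGc Hd HKd) as HPc.
  pose proof (extension_picard_solves b M K d Hb HM HK HGb HGl HGc Hd Hda HKd HMd' HMdL) as HPsol.
  pose proof (extension_du_eq_picard b M K d Hb HM HK HGb HGl HGc Hd Hda HKd HMdL) as HduP.
  pose proof (extension_d2u_eq b M d Hb HM Hd Hda HMdL) as Hd2u.
  set (x0 := a - d / 4) in *. set (P := picard_limit (clamped_rhs a b) x0 (du x0) d) in *.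
  destruct (is_solution_glue a (a + d / 2) x0 u du d2u (fun r => u x0 + RInt P x0 r) P
    (fun r => clamped_rhs a b r (P r))) as [v [dv [d2v [Hv Hvu]]]];
    [unfold x0; lra | lra | exact Hsol | | |].
  - intros r Hr. destruct (HPsol r ltac:(unfold x0 in *; lra)) as [HPd HPo].
    split; [apply (is_derive_RInt_upper P (u x0) x0 r HPc)|].
    split; [exact HPd|]. split; [apply HGc, HPc | exact HPo].
  - intros r Hr. rewrite <- HduP, <- Hd2u by lra. repeat split.
    destruct Hsol as [[Hd1 [_ Hc]] _].
    rewrite (RInt_of_derive u du x0 r); [|lra | |].
    + f_equal. apply RInt_ext. intros s Hs. rewrite Rmin_left, Rmax_right in Hs by lra.
      symmetry. apply HduP. lra.
    + intros s Hs. apply (is_derive_dom_interior (Finite a)); auto; simpl; unfold x0 in *; lra.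
    + intros s Hs. apply (ex_derive_continuous (K := R_AbsRing) (V := R_NormedModule)).
      exists (d2u s). apply (is_derive_dom_interior (Finite a)); [apply Hsol | | ];
        simpl; unfold x0 in *; lra.
  - exists (Finite (a + d / 2)), v, dv, d2v. split; [simpl; lra | auto].
Qed.

End Extension.

Theorem theorem2 (Rm : Rbar) (u du d2u : R -> R) :
  Rbar_lt 0 Rm ->
  is_maximal_solution Rm u du d2u ->
  (exists rM : R, Rm = Finite rM /\ 0 < rM) /\
  filterlim du (at_left (real Rm)) (locally (1 / sqrt 3)).
Proof.
  intros Hm [Hsol Hmax].
  assert (Hfin : exists a, Rm = Finite a /\ 0 < a).
  { destruct Rm as [a| |]; simpl in Hm; try contradiction; [eauto|].
    exfalso. exact (solution_domain_bounded u du d2u Hsol). }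
  split; [exact Hfin|]. destruct Hfin as [a [-> Ha]]. simpl.
  assert (HInv : forall r, 0 < r < a -> slope_invariant du d2u r)
    by (intros r Hr; apply (solution_invariant (Finite a) u); simpl; auto; lra).
  destruct (nondecreasing_cvg_at_left du 0 a inv_sqrt3 Ha
    (fun x y Hx Hxy Hy => solution_du_nondecreasing (Finite a) u du d2u Hm Hsol x y Hx Hxy Hy)
    (fun r Hr => Rlt_le _ _ (proj1 (proj2 (proj2 (HInv r Hr))))))
    as [l [Hls [Hle Hlim]]].
  change (1 / sqrt 3) with inv_sqrt3.
  destruct (Rle_lt_or_eq_dec _ _ Hls) as [Hlt|<-]; [exfalso | exact Hlim].
  destruct (solution_extension a l u du d2u Ha Hsol HInv Hle Hlt) as [Rm' [v [dv [d2v [H1 [H2 H3]]]]]].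
  exact (Hmax Rm' v dv d2v H1 H2 H3).
Qed.
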